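(* Let $N\ge 1$, let $\mathcal{L}_e$ be a finite index set of size $L_e$, and for each $\ell\in\mathcal{L}_e$ let $\mathbf{a}_\ell\in\mathbb{R}^N$ and $r_\ell>0$, $x_\ell>0$ be given. For $\mathbf{b}=(b_\ell)_{\ell\in\mathcal{L}_e}\in\mathbb{R}^{L_e}$ define $$\mathbf{R}^{-1}(\mathbf{b})=\frac12\sum_{\ell\in\mathcal{L}_e}\frac{b_\ell}{r_\ell}\mathbf{a}_\ell\mathbf{a}_\ell^\top,\qquad \mathbf{X}^{-1}(\mathbf{b})=\frac12\sum_{\ell\in\mathcal{L}_e}\frac{b_\ell}{x_\ell}\mathbf{a}_\ell\mathbf{a}_\ell^\top,$$ and, whenever these two matrices are invertible, let $\mathbf{R}(\mathbf{b}),\mathbf{X}(\mathbf{b})$ denote their inverses. Let $\boldsymbol{\Sigma}_p,\boldsymbol{\Sigma}_q\in\mathbb{R}^{N\times N}$ be symmetric, $\boldsymbol{\Sigma}_{pq}\in\mathbb{R}^{N\times N}$, $\sigma_n^2\ge 0$, and $$\boldsymbol{\Sigma}(\mathbf{b})=\mathbf{R}(\mathbf{b})\boldsymbol{\Sigma}_p\mathbf{R}(\mathbf{b})+\mathbf{X}(\mathbf{b})\boldsymbol{\Sigma}_q\mathbf{X}(\mathbf{b})+\mathbf{R}(\mathbf{b})\boldsymbol{\Sigma}_{pq}\mathbf{X}(\mathbf{b})+\mathbf{X}(\mathbf{b})\boldsymbol{\Sigma}_{pq}^\top\mathbf{R}(\mathbf{b})+\sigma_n^2\mathbf{I}_N.$$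 Let $\hat{\boldsymbol{\Sigma}}\in\mathbb{R}^{N\times N}$ be symmetric positive semidefinite and $f(\mathbf{b})=\log|\boldsymbol{\Sigma}(\mathbf{b})|+\operatorname{trace}(\boldsymbol{\Sigma}^{-1}(\mathbf{b})\hat{\boldsymbol{\Sigma}})$. Then at any $\mathbf{b}$ where $\mathbf{R}(\mathbf{b})$, $\mathbf{X}(\mathbf{b})$ exist and $\boldsymbol{\Sigma}(\mathbf{b})\succ 0$, for every $\ell\in\mathcal{L}_e$, $$\frac{\partial f(\mathbf{b})}{\partial b_\ell}=-\frac{1}{r_\ell}\mathbf{a}_\ell^\top\mathbf{R}\boldsymbol{\Sigma}_p\mathbf{R}\mathbf{F}\mathbf{R}\mathbf{a}_\ell-\frac{1}{x_\ell}\mathbf{a}_\ell^\top\mathbf{X}\boldsymbol{\Sigma}_q\mathbf{X}\mathbf{F}\mathbf{X}\mathbf{a}_\ell-\frac{1}{r_\ell}\mathbf{a}_\ell^\top\mathbf{R}\boldsymbol{\Sigma}_{pq}\mathbf{X}\mathbf{F}\mathbf{R}\mathbf{a}_\ell-\frac{1}{x_\ell}\mathbf{a}_\ell^\top\mathbf{X}\mathbf{F}\mathbf{R}\boldsymbol{\Sigma}_{pq}\mathbf{X}\mathbf{a}_\ell,$$ where $\mathbf{R}=\mathbf{R}(\mathbf{b})$, $\mathbf{X}=\mathbf{X}(\mathbf{b})$ and $\mathbf{F}=\mathbf{F}(\mathbf{b}):=\boldsymbol{\Sigma}^{-1}(\mathbf{b})-\boldsymbol{\Sigma}^{-1}(\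mathbf{b})\hat{\boldsymbol{\Sigma}}\boldsymbol{\Sigma}^{-1}(\mathbf{b})$.
   Context: $|\cdot|$ denotes the determinant. In the application, $\mathbf{a}_\ell^\top$ are rows of a reduced branch-bus incidence matrix of a distribution grid (substation column removed), $r_\ell,x_\ell$ are line resistances and reactances, $\mathbf{b}$ is a line-status indicator vector, $\boldsymbol{\Sigma}_p=\mathbb{E}[\tilde{\mathbf p}\tilde{\mathbf p}^\top]$, $\boldsymbol{\Sigma}_q=\mathbb{E}[\tilde{\mathbf q}\tilde{\mathbf q}^\top]$, $\boldsymbol{\Sigma}_{pq}=\mathbb{E}[\tilde{\mathbf p}\tilde{\mathbf q}^\top]$ are covariances of differential active/reactive power injections, and $\hat{\boldsymbol{\Sigma}}$ is the sample covariance of differential squared-voltage data. *)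

From HB Require Import structures.
From mathcomp Require Import all_boot all_order all_algebra.
From mathcomp Require Import all_classical all_reals all_analysis.
Set Implicit Arguments. Unset Strict Implicit. Unset Printing Implicit Defensive.
Import Order.TTheory GRing.Theory Num.Theory.
Import numFieldNormedType.Exports.
Local Open Scope ring_scope.

Section Defs.
Variables (R : realType) (N : nat) (Le : finType).

(* (1/2) sum_l (b_l / w_l) a_l a_l^T ; with w = r gives R^{-1}(b), w = x gives X^{-1}(b) *)
Definition inv_weighted (a : Le -> 'cV[R]_N) (w : Le -> R) (b : Le -> R) : 'M[R]_N :=
  (1/2) *: \sum_(l : Le) (b l / w l) *: (a l *m (a l)^T).

Definition Sigma_b (a : Le -> 'cV[R]_N) (r x : Le -> R)
  (Sp Sq Spq : 'M[R]_N) (sn2 : R) (b : Le -> R) : 'M[R]_N :=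
  let Rm := invmx (inv_weighted a r b) in
  let Xm := invmx (inv_weighted a x b) in
  Rm *m Sp *m Rm + Xm *m Sq *m Xm + Rm *m Spq *m Xm + Xm *m Spq^T *m Rm
  + sn2 *: 1%:M.

Definition f_obj (a : Le -> 'cV[R]_N) (r x : Le -> R)
  (Sp Sq Spq : 'M[R]_N) (sn2 : R) (Shat : 'M[R]_N) (b : Le -> R) : R :=
  let S := Sigma_b a r x Sp Sq Spq sn2 b in
  ln (\det S) + \tr (invmx S *m Shat).

Definition F_mat (a : Le -> 'cV[R]_N) (r x : Le -> R)
  (Sp Sq Spq : 'M[R]_N) (sn2 : R) (Shat : 'M[R]_N) (b : Le -> R) : 'M[R]_N :=
  let S := Sigma_b a r x Sp Sq Spq sn2 b in
  invmx S - invmx S *m Shat *m invmx S.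

Definition quadf (v : 'cV[R]_N) (M : 'M[R]_N) : R := (v^T *m M *m v) 0 0.

Definition sym_mx (M : 'M[R]_N) : Prop := M^T = M.

Definition psd_mx (M : 'M[R]_N) : Prop :=
  sym_mx M /\ forall v : 'cV[R]_N, 0 <= quadf v M.

Definition pd_mx (M : 'M[R]_N) : Prop :=
  sym_mx M /\ forall v : 'cV[R]_N, v != 0 -> 0 < quadf v M.

Definition shift_coord (b : Le -> R) (l : Le) (t : R) : Le -> R :=
  fun k => b k + (if k == l then t else 0).

End Defs.

From HB Require Import structures.
From mathcomp Require Import all_boot all_order all_algebra.
From mathcomp Require Import all_classical all_reals all_analysis.
From mathcomp Require Import ring lra.
Import Order.TTheory GRing.Theory Num.Theory.
Import numFieldNormedType.Exports.
Set Implicit Arguments.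
Unset Strict Implicit.
Unset Printing Implicit Defensive.
Local Open Scope ring_scope.

(* Differentiate along the line b + t e_l.  There R^-1 and X^-1 are affine in
   t with slopes D_r = a_l a_l^T / (2 r_l) and D_x = a_l a_l^T / (2 x_l), so
   R' = - R D_r R and X' = - X D_x X.  Jacobi's formula and the derivative of
   the inverse give (ln det S + tr (S^-1 Shat))' = tr (S' F), the logarithm
   being differentiable because det S > 0 for positive definite S.  As R, X
   and F are symmetric, the eight terms of S' pair off with their transposes,
   and each trace tr (P a a^T P B) is the quadratic form a^T (P B P) a. *)

Section ScalarDerivatives.
Context {R : realType}.
Implicit Types (f g : R -> R) (t : R).

Lemma is_derive_mul f g t df dg :
  is_derive t 1 f df -> is_derive t 1 g dg ->
  is_derive t 1 (fun u => f u * g u) (df * g t + f t * dg).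
Proof.
move=> Hf Hg; have -> : (fun u => f u * g u) = (f * g)%R by [].
eapply is_derive_eq; first exact: is_deriveM Hf Hg.
by rewrite /GRing.scale /= addrC mulrC [_ * dg]mulrC.
Qed.

Lemma is_derive_big_sum (I : Type) (s : seq I) (h : I -> R -> R) (dh : I -> R) t :
  (forall i, is_derive t 1 (h i) (dh i)) ->
  is_derive t 1 (fun u => \sum_(i <- s) h i u) (\sum_(i <- s) dh i).
Proof.
move=> Hh; elim: s => [|i s IHs].
  under eq_fun do rewrite big_nil.
  by rewrite big_nil; exact: is_derive_cst.
under eq_fun do rewrite big_cons.
by rewrite big_cons; exact: is_deriveD (Hh i) IHs.
Qed.

Lemma is_derive_big_prod (I : eqType) (s : seq I) (h : I -> R -> R) (dh : I -> R) t :
  uniq s -> (forall i, is_derive t 1 (h i) (dh i)) ->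
  is_derive t 1 (fun u => \prod_(i <- s) h i u)
    (\sum_(k <- s) dh k * \prod_(i <- s | i != k) h i t).
Proof.
move=> + Hh; elim: s => [|i s IHs] /=.
  move=> _; under eq_fun do rewrite big_nil.
  by rewrite big_nil; exact: is_derive_cst.
case/andP=> i_s s_uniq.
under eq_fun do rewrite big_cons.
apply: is_derive_eq; first exact: is_derive_mul (Hh i) (IHs s_uniq).
rewrite big_cons big_cons eqxx /=; congr (_ * _ + _).
  rewrite [LHS]big_seq_cond [RHS]big_seq_cond; apply: eq_bigl => j.
  by case: (eqVneq j i) => [->|]; rewrite ?(negbTE i_s) ?andbT.
rewrite big_distrr /= !big_seq; apply: eq_bigr => k k_s.
have ik : i != k by apply: contraNneq i_s => ->.
by rewrite big_cons ik mulrCA.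
Qed.

Lemma is_derive_continuous f t df : is_derive t 1 f df -> {for t, continuous f}.
Proof. by case=> /derivable1_diffP/differentiable_continuous. Qed.

End ScalarDerivatives.

Section MatrixDerivatives.
Context {R : realType}.
Implicit Types t : R.

Definition is_derive_mx {m n} (A : R -> 'M[R]_(m, n)) t (dA : 'M[R]_(m, n)) :=
  forall i j, is_derive t 1 (fun u => A u i j) (dA i j).

Lemma is_derive_mx_eq m n (A : R -> 'M[R]_(m, n)) t dA dA' :
  is_derive_mx A t dA -> dA = dA' -> is_derive_mx A t dA'.
Proof. by move=> + <-. Qed.

Lemma is_derive_mx_cst m n (C : 'M[R]_(m, n)) t : is_derive_mx (fun=> C) t 0.
Proof. by move=> i j; rewrite mxE; exact: is_derive_cst. Qed.

Lemma is_derive_mx_line m n (B C : 'M[R]_(m, n)) t :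
  is_derive_mx (fun u => B + u *: C) t C.
Proof.
move=> i j; under eq_fun do rewrite !mxE.
apply: is_derive_eq.
by rewrite add0r mul1r scaler0 add0r [_%:A]mulr1.
Qed.

Lemma is_derive_mxD m n (A B : R -> 'M[R]_(m, n)) t dA dB :
  is_derive_mx A t dA -> is_derive_mx B t dB ->
  is_derive_mx (fun u => A u + B u) t (dA + dB).
Proof.
move=> HA HB i j; under eq_fun do rewrite mxE.
by rewrite mxE; exact: is_deriveD (HA i j) (HB i j).
Qed.

Lemma is_derive_mxM m n p (A : R -> 'M[R]_(m, n)) (B : R -> 'M[R]_(n, p)) t dA dB :
  is_derive_mx A t dA -> is_derive_mx B t dB ->
  is_derive_mx (fun u => A u *m B u) t (dA *m B t + A t *m dB).
Proof.
move=> HA HB i j; under eq_fun do rewrite mxE.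
rewrite !mxE -big_split /=.
by apply: is_derive_big_sum => k; exact: is_derive_mul (HA i k) (HB k j).
Qed.

Lemma is_derive_mx_sandwich m n p q (A : R -> 'M[R]_(m, n)) (C : 'M[R]_(n, p))
    (B : R -> 'M[R]_(p, q)) t dA dB :
  is_derive_mx A t dA -> is_derive_mx B t dB ->
  is_derive_mx (fun u => A u *m C *m B u) t (dA *m C *m B t + A t *m C *m dB).
Proof.
move=> HA HB; apply: is_derive_mx_eq.
  exact: is_derive_mxM (is_derive_mxM HA (is_derive_mx_cst C t)) HB.
by rewrite mulmx0 addr0.
Qed.

Lemma is_derive_mxtrace n (A : R -> 'M[R]_n) t dA :
  is_derive_mx A t dA -> is_derive t 1 (fun u => \tr (A u)) (\tr dA).
Proof. by move=> HA; apply: is_derive_big_sum => i; exact: HA. Qed.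

Lemma is_derive_mx_minor m n (A : R -> 'M[R]_(m, n)) t dA i0 j0 :
  is_derive_mx A t dA ->
  is_derive_mx (fun u => row' i0 (col' j0 (A u))) t (row' i0 (col' j0 dA)).
Proof. by move=> HA i j; under eq_fun do rewrite !mxE; rewrite !mxE; exact: HA. Qed.

(* Jacobi's formula: the Leibniz product rule gives the sum over k of the
   determinants of A with row k replaced by that of dA, and expanding each of
   them along row k gives the trace. *)
Lemma is_derive_det n (A : R -> 'M[R]_n) t dA : is_derive_mx A t dA ->
  is_derive t 1 (fun u => \det (A u)) (\tr (dA *m \adj (A t))).
Proof.
move=> HA; apply: is_derive_eq.
  apply: is_derive_big_sum => s; apply: is_derive_eq.
    apply: is_derive_mul (is_derive_cst _ _ _) _.
    by apply: is_derive_big_prod (index_enum_uniq _) _ => i; exact: HA.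
  by rewrite mul0r add0r.
pose Ak k := \matrix_(i, j) (if i == k then dA i j else A t i j).
have detAk k : \det (Ak k) = \sum_j dA k j * cofactor (A t) k j.
  rewrite (expand_det_row _ k); apply: eq_bigr => j _.
  rewrite mxE eqxx /cofactor; congr (_ * (_ * \det _)).
  by apply/matrixP => i i'; rewrite !mxE eq_sym (negbTE (neq_lift _ _)).
have -> : \tr (dA *m \adj (A t)) = \sum_k \det (Ak k).
  by apply: eq_bigr => k _; rewrite detAk mxE; apply: eq_bigr => j _; rewrite mxE.
rewrite exchange_big /=; apply: eq_bigr => s _.
rewrite big_distrr /=; apply: eq_bigr => k _.
rewrite [in RHS](bigD1 k) //= !mxE eqxx; congr (_ * (_ * _)).
by apply: eq_bigr => i ik; rewrite mxE (negbTE ik).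
Qed.

End MatrixDerivatives.

Section MatrixInverse.
Context {R : realType} (n : nat) (A : R -> 'M[R]_n) (t : R) (dA : 'M[R]_n).
Hypotheses (HA : is_derive_mx A t dA) (unitA : A t \in unitmx).

Lemma near_unitmx : \forall u \near t, A u \in unitmx.
Proof.
have detA_neq0 : \det (A t) != 0 by rewrite -unitfE -unitmxE.
have detA_near_neq0 := @cvgr_neq0 _ _ _ _ _ (fun u => \det (A u)) _
  (is_derive_continuous (is_derive_det HA)) detA_neq0.
near=> u; rewrite unitmxE unitfE; near: u; exact: detA_near_neq0.
Unshelve. all: by end_near.
Qed.

Lemma derivable_mx_invmx : exists Y, is_derive_mx (fun u => invmx (A u)) t Y.
Proof.
exists (\matrix_(i, j) 'D_1 (fun u => invmx (A u) i j) t) => i j; rewrite mxE.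
apply: derivableP.
have detA_neq0 : \det (A t) != 0 by rewrite -unitfE -unitmxE.
have Hcof := is_derive_mul (is_deriveV detA_neq0 (is_derive_det HA))
  (is_derive_mul (is_derive_cst ((-1) ^+ (j + i) : R) t 1)
                 (is_derive_det (is_derive_mx_minor j i HA))).
have invE : \forall u \near t, (\det (A u))^-1 *
    ((-1) ^+ (j + i) * \det (row' j (col' i (A u)))) = invmx (A u) i j.
  near=> u; have unitAu : A u \in unitmx by near: u; exact: near_unitmx.
  by rewrite /invmx unitAu !mxE.
by case: (near_eq_is_derive invE Hcof).
Unshelve. all: by end_near.
Qed.

Lemma is_derive_invmx :
  is_derive_mx (fun u => invmx (A u)) t (- (invmx (A t) *m dA *m invmx (A t))).
Proof.
have [Y HY] := derivable_mx_invmx.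
have HAY0 : is_derive_mx (fun u => A u *m invmx (A u)) t 0.
  move=> i j; apply: near_eq_is_derive (is_derive_mx_cst 1%:M t i j).
  near=> u; have unitAu : A u \in unitmx by near: u; exact: near_unitmx.
  by rewrite mulmxV.
have dAY : dA *m invmx (A t) + A t *m Y = 0.
  apply/matrixP => i j.
  by case: (is_derive_mxM HA HY i j) => _ <-; case: (HAY0 i j) => _ <-.
have AY : A t *m Y = - (dA *m invmx (A t)).
  by apply/eqP; rewrite -subr_eq0 opprK addrC dAY.
suff -> : - (invmx (A t) *m dA *m invmx (A t)) = Y by [].
by rewrite -[Y]mul1mx -(mulVmx unitA) -[RHS]mulmxA AY mulmxN mulmxA.
Unshelve. all: by end_near.
Qed.

End MatrixInverse.

Section PositiveDefinite.
Context {R : realType} (n : nat).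
Implicit Types (v : 'cV[R]_n) (M : 'M[R]_n).

Lemma quadfD v M M' : quadf v (M + M') = quadf v M + quadf v M'.
Proof. by rewrite /quadf mulmxDr mulmxDl mxE. Qed.

Lemma quadfZ v c M : quadf v (c *: M) = c * quadf v M.
Proof. by rewrite /quadf -scalemxAr -scalemxAl mxE. Qed.

Lemma quadf1_gt0 v : v != 0 -> 0 < quadf v 1%:M.
Proof.
move=> v_neq0; rewrite /quadf mulmx1 mxE.
have sq_ge0 i : 0 <= v^T 0 i * v i 0 by rewrite mxE -expr2 sqr_ge0.
rewrite lt_def sumr_ge0 // andbT; apply: contra v_neq0.
move=> /eqP /(psumr_eq0P (fun i _ => sq_ge0 i)) v0.
apply/eqP/matrixP => i j; rewrite (ord1 j) mxE.
by have /eqP := v0 i isT; rewrite mxE -expr2 sqrf_eq0 => /eqP.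
Qed.

Lemma det_neq0_quadf_gt0 M : (forall v, v != 0 -> 0 < quadf v M) -> \det M != 0.
Proof.
move=> posM; apply/negP => /det0P [v v_neq0 vM0].
have vT_neq0 : v^T != 0 by rewrite -trmx0 (inj_eq trmx_inj).
by have := posM _ vT_neq0; rewrite /quadf trmxK vM0 mul0mx mxE ltxx.
Qed.

(* The determinant cannot vanish on the segment from 1%:M to M, whose points
   all have positive quadratic forms, so by the intermediate value theorem it
   keeps the sign of det 1%:M = 1. *)
Lemma det_gt0_quadf_gt0 M : (forall v, v != 0 -> 0 < quadf v M) -> 0 < \det M.
Proof.
move=> posM; pose g s := \det (1%:M + s *: (M - 1%:M)).
have segmentE s : 1%:M + s *: (M - 1%:M) = (1 - s) *: 1%:M + s *: M.
  by rewrite scalerBr scalerBl scale1r addrA addrAC.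
have g_neq0 s : 0 <= s <= 1 -> g s != 0.
  case/andP=> s_ge0 s_le1; rewrite /g segmentE.
  apply: det_neq0_quadf_gt0 => v v_neq0; rewrite quadfD !quadfZ.
  have := quadf1_gt0 v_neq0; have := posM v v_neq0; nra.
rewrite ltNge; apply/negP => detM_le0.
have [c c01 gc0] : exists2 c, c \in `[0, 1] & g c = 0.
  apply: IVT => //.
    apply: continuous_subspaceT => s.
    exact: is_derive_continuous (is_derive_det (is_derive_mx_line _ _ s)).
  rewrite /g scale0r addr0 det1 scale1r addrC subrK.
  by rewrite ge_min detM_le0 le_max ler01 orbT.
by move: c01; rewrite in_itv /= => /g_neq0; rewrite gc0 eqxx.
Qed.

End PositiveDefinite.

Lemma is_derive_ln_det_trace {R : realType} n (S : R -> 'M[R]_n) t dS (H : 'M[R]_n) :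
  is_derive_mx S t dS -> 0 < \det (S t) ->
  is_derive t 1 (fun u => ln (\det (S u)) + \tr (invmx (S u) *m H))
    (\tr (dS *m (invmx (S t) - invmx (S t) *m H *m invmx (S t)))).
Proof.
move=> HS detS_gt0.
have unitS : S t \in unitmx by rewrite unitmxE unitfE gt_eqF.
have Hln := is_derive1_comp (is_derive1_ln detS_gt0) (is_derive_det HS).
have Htr := is_derive_mxtrace
  (is_derive_mxM (is_derive_invmx HS unitS) (is_derive_mx_cst H t)).
eapply is_derive_eq; first exact: is_deriveD Hln Htr.
have adjS : \adj (S t) = \det (S t) *: invmx (S t).
  by rewrite /invmx unitS scalerA mulfV ?scale1r ?gt_eqF.
rewrite adjS -scalemxAr mxtraceZ mulrA mulVf ?gt_eqF // mul1r.
rewrite mulmx0 addr0 mulmxBr mxtraceD !(mulNmx, linearN) /=.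
by congr (_ - _); rewrite -!mulmxA mxtrace_mulC !mulmxA.
Qed.

Section TraceIdentities.
Context {R : realType} (n : nat).
Implicit Types (P Q B C F : 'M[R]_n) (v : 'cV[R]_n).

Lemma mxtrace_mul_trmx (M : 'M[R]_n) F : F^T = F -> \tr (M^T *m F) = \tr (M *m F).
Proof. by move=> symF; rewrite -mxtrace_tr trmx_mul trmxK symF mxtrace_mulC. Qed.

Lemma trmx_sandwich P C : P^T = P -> C^T = C -> (P *m C *m P)^T = P *m C *m P.
Proof. by move=> symP symC; rewrite !trmx_mul symP symC mulmxA. Qed.

Lemma trmx_rank1 c v : (c *: (v *m v^T))^T = c *: (v *m v^T).
Proof. by rewrite linearZ /= trmx_mul trmxK. Qed.

Lemma mxtrace_sandwich_rank1 c P B v :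
  \tr (- (P *m (c *: (v *m v^T)) *m P) *m B) = - c * quadf v (P *m B *m P).
Proof.
rewrite mulNmx linearN /= -scalemxAr -!scalemxAl mxtraceZ mulNr /quadf.
by rewrite -!mulmxA mxtrace_mulC -mulmxA mxtrace_mulC trace_mx11 !mulmxA.
Qed.

End TraceIdentities.

Section Sigma.
Context {R : realType} (n : nat) (Sp Sq Spq : 'M[R]_n) (sn2 : R).

Definition Sigma_of (P Q : 'M[R]_n) : 'M[R]_n :=
  P *m Sp *m P + Q *m Sq *m Q + P *m Spq *m Q + Q *m Spq^T *m P + sn2 *: 1%:M.

Definition dSigma_of (P Q dP dQ : 'M[R]_n) : 'M[R]_n :=
  dP *m Sp *m P + P *m Sp *m dP + (dQ *m Sq *m Q + Q *m Sq *m dQ)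
  + (dP *m Spq *m Q + P *m Spq *m dQ) + (dQ *m Spq^T *m P + Q *m Spq^T *m dP).

Lemma is_derive_mx_Sigma_of (P Q : R -> 'M[R]_n) t dP dQ :
  is_derive_mx P t dP -> is_derive_mx Q t dQ ->
  is_derive_mx (fun u => Sigma_of (P u) (Q u)) t (dSigma_of (P t) (Q t) dP dQ).
Proof.
move=> HP HQ; apply: is_derive_mx_eq; last exact: addr0.
apply: is_derive_mxD (is_derive_mx_cst _ t).
apply: is_derive_mxD (is_derive_mx_sandwich _ HQ HP).
apply: is_derive_mxD (is_derive_mx_sandwich _ HP HQ).
exact: is_derive_mxD (is_derive_mx_sandwich _ HP HP) (is_derive_mx_sandwich _ HQ HQ).
Qed.

Lemma mxtrace_dSigma_of (P Q dP dQ F : 'M[R]_n) :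
  P^T = P -> Q^T = Q -> dP^T = dP -> dQ^T = dQ -> Sp^T = Sp -> Sq^T = Sq -> F^T = F ->
  \tr (dSigma_of P Q dP dQ *m F)
  = 2 * (\tr (dP *m (Sp *m P *m F)) + \tr (dQ *m (Sq *m Q *m F))
         + \tr (dP *m (Spq *m Q *m F)) + \tr (dQ *m (F *m P *m Spq))).
Proof.
move=> symP symQ symdP symdQ symSp symSq symF.
have pairT (U V W : 'M[R]_n) : V^T = V -> W^T = W ->
    \tr (W *m U *m V *m F) = \tr (V *m U^T *m W *m F).
  by move=> symV symW; rewrite -mxtrace_mul_trmx // !trmx_mul symV symW !mulmxA.
rewrite !mulmxDl !mxtraceD (pairT Sp dP P) // (pairT Sq dQ Q) //.
rewrite (pairT Spq^T P dQ) // (pairT Spq^T dP Q) // symSp symSq !trmxK.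
have -> : \tr (dQ *m (F *m P *m Spq)) = \tr (P *m Spq *m dQ *m F).
  by rewrite mxtrace_mulC -!mulmxA mxtrace_mulC -!mulmxA.
rewrite !mulmxA; ring.
Qed.

Lemma mxtrace_dSigma_of_rank1 (P Q F : 'M[R]_n) (v : 'cV[R]_n) (cP cQ : R) :
  P^T = P -> Q^T = Q -> Sp^T = Sp -> Sq^T = Sq -> F^T = F ->
  let dP := - (P *m (cP *: (v *m v^T)) *m P) in
  let dQ := - (Q *m (cQ *: (v *m v^T)) *m Q) in
  \tr (dSigma_of P Q dP dQ *m F)
  = - (2 * cP) * quadf v (P *m Sp *m P *m F *m P)
    - (2 * cQ) * quadf v (Q *m Sq *m Q *m F *m Q)
    - (2 * cP) * quadf v (P *m Spq *m Q *m F *m P)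
    - (2 * cQ) * quadf v (Q *m F *m P *m Spq *m Q).
Proof.
move=> symP symQ symSp symSq symF dP dQ.
have symdP : dP^T = dP by rewrite linearN /= trmx_sandwich ?trmx_rank1.
have symdQ : dQ^T = dQ by rewrite linearN /= trmx_sandwich ?trmx_rank1.
rewrite mxtrace_dSigma_of // !mxtrace_sandwich_rank1 !mulmxA; ring.
Qed.

End Sigma.

Section InverseWeighted.
Context {R : realType} (N : nat) (Le : finType) (a : Le -> 'cV[R]_N) (w : Le -> R).

Lemma trmx_inv_weighted b : (inv_weighted a w b)^T = inv_weighted a w b.
Proof.
rewrite /inv_weighted linearZ linear_sum /=; congr (_ *: _).
by apply: eq_bigr => k _; rewrite linearZ /= trmx_mul trmxK.
Qed.

Lemma shift_coord0 (b : Le -> R) l : shift_coord b l 0 = b.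
Proof. by apply: funext => k; rewrite /shift_coord if_same addr0. Qed.

Lemma inv_weighted_shift_coord b l u :
  inv_weighted a w (shift_coord b l u)
  = inv_weighted a w b + u *: ((2 * w l)^-1 *: (a l *m (a l)^T)).
Proof.
rewrite /inv_weighted /shift_coord.
under eq_bigr do rewrite mulrDl scalerDl.
rewrite big_split /= scalerDr; congr (_ + _).
rewrite (bigD1 l) //= eqxx big1 ?addr0 => [|k /negbTE->].
  by rewrite !scalerA invfM; congr (_ *: _); ring.
by rewrite mul0r scale0r.
Qed.

Lemma is_derive_mx_invmx_inv_weighted b l : inv_weighted a w b \in unitmx ->
  let P := invmx (inv_weighted a w b) in
  is_derive_mx (fun u => invmx (inv_weighted a w (shift_coord b l u))) 0
    (- (P *m ((2 * w l)^-1 *: (a l *m (a l)^T)) *m P)).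
Proof.
move=> unitW P; under eq_fun do rewrite inv_weighted_shift_coord.
have := is_derive_invmx (is_derive_mx_line (inv_weighted a w b)
  ((2 * w l)^-1 *: (a l *m (a l)^T)) 0).
by rewrite /= scale0r addr0; apply.
Qed.

End InverseWeighted.

Theorem lemma1 (R : realType) (N : nat) (Le : finType)
  (a : Le -> 'cV[R]_N) (r x : Le -> R)
  (Sp Sq Spq : 'M[R]_N) (sn2 : R) (Shat : 'M[R]_N) (b : Le -> R) :
  (0 < N)%N ->
  (forall l, 0 < r l) -> (forall l, 0 < x l) ->
  sym_mx Sp -> sym_mx Sq -> 0 <= sn2 -> psd_mx Shat ->
  inv_weighted a r b \in unitmx -> inv_weighted a x b \in unitmx ->
  pd_mx (Sigma_b a r x Sp Sq Spq sn2 b) ->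
  forall l : Le,
  let Rm := invmx (inv_weighted a r b) in
  let Xm := invmx (inv_weighted a x b) in
  let F := F_mat a r x Sp Sq Spq sn2 Shat b in
  is_derive (0 : R) (1 : R)
    (fun t : R => f_obj a r x Sp Sq Spq sn2 Shat (shift_coord b l t))
    (- (1 / r l) * quadf (a l) (Rm *m Sp *m Rm *m F *m Rm)
     - (1 / x l) * quadf (a l) (Xm *m Sq *m Xm *m F *m Xm)
     - (1 / r l) * quadf (a l) (Rm *m Spq *m Xm *m F *m Rm)
     - (1 / x l) * quadf (a l) (Xm *m F *m Rm *m Spq *m Xm)).
Proof.
move=> _ _ _ symSp symSq _ [symShat _] unitR unitX [symS posS] l Rm Xm F.
have symR : Rm^T = Rm by rewrite trmx_inv trmx_inv_weighted.
have symX : Xm^T = Xm by rewrite trmx_inv trmx_inv_weighted.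
have symF : F^T = F.
  by rewrite /F /F_mat linearB /= !trmx_mul trmx_inv symS symShat mulmxA.
have twice_half w : 2 * (2 * w)^-1 = 1 / w :> R.
  by rewrite invfM mulrA mulfV ?pnatr_eq0 // mul1r div1r.
have dR := is_derive_mx_invmx_inv_weighted l unitR.
have dX := is_derive_mx_invmx_inv_weighted l unitX.
have := is_derive_ln_det_trace Shat (is_derive_mx_Sigma_of Sp Sq Spq sn2 dR dX).
rewrite /= shift_coord0 => /(_ (det_gt0_quadf_gt0 posS)) df.
apply: is_derive_eq df _.
rewrite (mxtrace_dSigma_of_rank1 (F := F) Spq _ _ _ symR symX symSp symSq symF).
by rewrite !twice_half.
Qed.
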